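(* Let $0<\lambda<1$ and let $A \subseteq \mathbb{N}$. Suppose there exists a sequence $(c_n)_{n \in \mathbb{N}}$ of positive real numbers with $\lim_{n\to\infty} c_n = 0$ such that for every $n \in \mathbb{N}$, $$\sum_{a \in A[x]} \frac{c_n(1-\lambda)\log(a)\exp(c_n a^{1-\lambda})}{a^\lambda} \sim \exp(c_n x^{1-\lambda}) \qquad (x\to\infty).$$ Then $$\pi_A(x + x^\lambda) - \pi_A(x) \sim \frac{x^\lambda}{\log(x)}.$$
   Context: Here $\mathbb{N} = \{1,2,3,\dots\}$. For $A \subseteq \mathbb{N}$ and $x\in\mathbb{R}$, write $A[x] = \{a \in A : a \le x\}$ and $\pi_A(x) = \# A[x]$. $f\sim g$ means $f(x)/g(x)\to 1$ as $x\to\infty$. *)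

From Stdlib Require Import Reals List ZArith.
From Coquelicot Require Import Coquelicot.
Import ListNotations.
Open Scope R_scope.

(* Subsets A of N = {1,2,...} are given by boolean predicates on nat;
   only values at a >= 1 matter. *)

(* floor of a real as a natural number (0 for negative x) *)
Definition nat_floor (x : R) : nat := Z.to_nat (Int_part x).

(* A[x] = { a in A : 1 <= a <= x }, as a list *)
Definition A_upto (A : nat -> bool) (x : R) : list nat :=
  filter A (seq 1 (nat_floor x)).

Definition pi_A (A : nat -> bool) (x : R) : R := INR (length (A_upto A x)).

Definition sum_A (A : nat -> bool) (x : R) (F : nat -> R) : R :=
  fold_right Rplus 0 (map F (A_upto A x)).

Definition asymp (f g : R -> R) : Prop :=
  is_lim (fun x => f x / g x) p_infty 1.

From Stdlib Require Import Reals List ZArith Lra Lia Psatz.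
From Coquelicot Require Import Coquelicot.
Open Scope R_scope.

(* Fix a scale c = c_n, write u = c(1-lam), E(x) = exp(c x^(1-lam))
   for the growth function and w(a) for the weight of a, so that the hypothesis
   says S(x) := sum_{a in A[x]} w(a) ~ E(x).  For a short window (x, y] with
   y = x + h and h = x^lam, every weight in the window lies between
   u ln x E(x)/y^lam and u ln y E(y)/x^lam, so the number N of elements of A in
   the window controls S(y) - S(x) from both sides.  On the other hand, for any
   d > 0 eventually S(y) - S(x) = E(y) - E(x) + O(d E(y)), and by the mean value
   theorem
   exp(u (x/y)^lam) <= E(y)/E(x) <= exp u.  Since ln x / ln y and (x/y)^lam tend
   to 1, comparing both descriptions pins q := N ln x / h in an interval around
   1 of width O(u); letting c_n -> 0 gives q -> 1.
   The file first proves the counting estimates on windows, then the analytic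
   estimates on E, then the two elementary inequalities that turn these into
   bounds on q, and finally the estimate at a fixed scale and the theorem. *)

Lemma nat_floor_spec x : 0 <= x -> INR (nat_floor x) <= x < INR (nat_floor x) + 1.
Proof.
intros Hx. unfold nat_floor. destruct (base_Int_part x) as [H1 H2].
assert (Hz : (0 <= Int_part x)%Z).
{ apply le_IZR. destruct (Rle_lt_dec 0 (IZR (Int_part x))) as [h|h]; [lra|].
  assert (Int_part x < 0)%Z by (apply lt_IZR; lra).
  assert (IZR (Int_part x) <= -1) by (apply IZR_le; lia). lra. }
rewrite INR_IZR_INZ, Z2Nat.id by exact Hz. lra.
Qed.

Lemma A_upto_split (A : nat -> bool) x y : 0 <= x <= y ->
  exists l, A_upto A y = A_upto A x ++ l /\ (forall a, In a l -> x < INR a <= y).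
Proof.
intros Hxy.
destruct (nat_floor_spec x) as [Hx1 Hx2]; [lra|].
destruct (nat_floor_spec y) as [Hy1 Hy2]; [lra|].
set (m := nat_floor x) in *. set (m' := nat_floor y) in *.
assert (Hm : (m <= m')%nat).
{ assert (INR m < INR (S m')) by (rewrite S_INR; lra). apply INR_lt in H. lia. }
exists (filter A (seq (S m) (m' - m))). split.
- unfold A_upto. fold m m'. replace m' with (m + (m' - m))%nat at 1 by lia.
  rewrite seq_app, filter_app. reflexivity.
- intros a Ha. apply filter_In in Ha as [Ha _]. apply in_seq in Ha.
  assert (INR (S m) <= INR a) by (apply le_INR; lia).
  assert (INR a <= INR m') by (apply le_INR; lia).
  rewrite S_INR in *. lra.
Qed.

Lemma sum_list_app (l1 l2 : list R) :
  fold_right Rplus 0 (l1 ++ l2) = fold_right Rplus 0 l1 + fold_right Rplus 0 l2.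
Proof. induction l1 as [|b l IH]; simpl; lra. Qed.

Lemma sum_list_bounds (l : list nat) (F : nat -> R) lo hi :
  (forall a, In a l -> lo <= F a <= hi) ->
  INR (length l) * lo <= fold_right Rplus 0 (map F l) <= INR (length l) * hi.
Proof.
induction l as [|b l IH]; intros H; [simpl; lra|].
simpl length. rewrite S_INR. simpl.
destruct (H b (or_introl eq_refl)).
destruct IH as [I1 I2]; [intros; apply H; right; auto|]. lra.
Qed.

Lemma sum_A_increment (A : nat -> bool) (F : nat -> R) x y lo hi :
  0 <= x <= y -> (forall a, x < INR a <= y -> lo <= F a <= hi) ->
  (pi_A A y - pi_A A x) * lo <= sum_A A y F - sum_A A x F
  <= (pi_A A y - pi_A A x) * hi.
Proof.
intros Hxy HF. destruct (A_upto_split A x y Hxy) as [l [Hl Hin]].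
unfold pi_A, sum_A. rewrite Hl, length_app, plus_INR, map_app, sum_list_app.
replace (INR (length (A_upto A x)) + INR (length l) - INR (length (A_upto A x)))
  with (INR (length l)) by ring.
replace (fold_right Rplus 0 (map F (A_upto A x)) + fold_right Rplus 0 (map F l)
         - fold_right Rplus 0 (map F (A_upto A x)))
  with (fold_right Rplus 0 (map F l)) by ring.
apply sum_list_bounds. intros a Ha. apply HF, Hin, Ha.
Qed.

Definition weight (lam c : R) (a : nat) : R :=
  c * (1 - lam) * ln (INR a) * exp (c * Rpower (INR a) (1 - lam)) / Rpower (INR a) lam.

Definition growth (lam c x : R) : R := exp (c * Rpower x (1 - lam)).

Lemma exp_le_mono x y : x <= y -> exp x <= exp y.
Proof. intros [H|H]; [left; apply exp_increasing; exact H | subst; lra]. Qed.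

Lemma frac_le_mono p1 p2 q1 q2 d1 d2 :
  0 < p1 <= p2 -> 0 < q1 <= q2 -> 0 < d2 <= d1 -> p1 * q1 / d1 <= p2 * q2 / d2.
Proof.
intros. unfold Rdiv. apply Rmult_le_compat.
- apply Rmult_le_pos; lra.
- left; apply Rinv_0_lt_compat; lra.
- apply Rmult_le_compat; lra.
- apply Rinv_le_contravar; lra.
Qed.

Lemma weight_bounds lam c x y (a : nat) :
  0 < lam < 1 -> 0 < c -> 1 < x -> x < INR a <= y ->
  c * (1 - lam) * ln x * growth lam c x / Rpower y lam <= weight lam c a
  <= c * (1 - lam) * ln y * growth lam c y / Rpower x lam.
Proof.
intros Hl Hc Hx Ha. unfold weight, growth.
assert (Hlx : 0 < ln x) by (rewrite <- ln_1; apply ln_increasing; lra).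
assert (ln x <= ln (INR a) <= ln y) by (split; apply ln_le; lra).
assert (0 < c * (1 - lam)) by (apply Rmult_lt_0_compat; lra).
assert (Hpow : forall m s t, 0 <= m -> 0 < s <= t -> Rpower s m <= Rpower t m)
  by (intros; apply Rle_Rpower_l; lra).
assert (Hgrow : forall s t, 0 < s <= t ->
          exp (c * Rpower s (1 - lam)) <= exp (c * Rpower t (1 - lam))).
{ intros s t Hst. apply exp_le_mono, Rmult_le_compat_l; [lra|]. apply Hpow; lra. }
split; apply frac_le_mono.
- split; [apply Rmult_lt_0_compat; lra | apply Rmult_le_compat_l; lra].
- split; [apply exp_pos | apply Hgrow; lra].
- split; [apply exp_pos | apply Hpow; lra].
- split; [apply Rmult_lt_0_compat; lra | apply Rmult_le_compat_l; lra].
- split; [apply exp_pos | apply Hgrow; lra].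
- split; [apply exp_pos | apply Hpow; lra].
Qed.

(* Mean value theorem for t |-> t^m with 0 < m < 1: the derivative
   m t^(m-1) is decreasing, so the increment is bounded by its endpoint values. *)
Lemma Rpower_increment_bounds m x h : 0 < m < 1 -> 0 < x -> 0 < h ->
  m * h * Rpower (x + h) (m - 1) <= Rpower (x + h) m - Rpower x m
  <= m * h * Rpower x (m - 1).
Proof.
intros Hm Hx Hh.
destruct (MVT_cor2 (fun t => Rpower t m) (fun t => m * Rpower t (m - 1)) x (x + h))
  as [t [Heq Ht]]; [lra | intros t Ht; apply derivable_pt_lim_power; lra |].
rewrite Heq. replace (x + h - x) with h by ring. unfold Rpower.
assert (ln x <= ln t <= ln (x + h)) by (split; apply ln_le; lra).
assert (exp ((m - 1) * ln (x + h)) <= exp ((m - 1) * ln t) <= exp ((m - 1) * ln x))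
  by (split; apply exp_le_mono; nra).
assert (0 < m * h) by (apply Rmult_lt_0_compat; lra).
split; nra.
Qed.

Lemma growth_ratio_bounds lam c x : 0 < lam < 1 -> 0 < c -> 0 < x ->
  let h := Rpower x lam in let y := x + h in
  exp (c * (1 - lam) * (h / Rpower y lam)) <= growth lam c y / growth lam c x
  <= exp (c * (1 - lam)).
Proof.
intros Hl Hc Hx h y.
assert (Hh : 0 < h) by apply exp_pos.
assert (Hratio : growth lam c y / growth lam c x
                 = exp (c * (Rpower y (1 - lam) - Rpower x (1 - lam)))).
{ unfold growth, Rdiv. rewrite <- exp_Ropp, <- exp_plus. f_equal. ring. }
assert (Hexp : forall t, 0 < t -> Rpower t (1 - lam - 1) = / Rpower t lam).
{ intros t _. rewrite <- Rpower_Ropp. f_equal. ring. }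
destruct (Rpower_increment_bounds (1 - lam) x h) as [Hlo Hhi]; [lra|lra|lra|].
fold y in Hlo, Hhi. rewrite Hexp in Hlo, Hhi by (unfold y; lra).
assert (Hunit : h * / Rpower x lam = 1) by (unfold h; field; apply Rgt_not_eq, exp_pos).
rewrite Rmult_assoc, Hunit, Rmult_1_r in Hhi.
rewrite Hratio. split; apply exp_le_mono; unfold Rdiv; nra.
Qed.

Lemma ln_shift_bounds x h : 0 < x -> 0 <= h -> 0 <= ln (x + h) - ln x <= h / x.
Proof.
intros Hx Hh.
assert (Ht : 0 <= h / x) by (apply Rdiv_le_0_compat; lra).
replace (x + h) with (x * (1 + h / x)) by (field; lra).
rewrite ln_mult by lra. split.
- assert (ln 1 <= ln (1 + h / x)) by (apply ln_le; lra). rewrite ln_1 in *. lra.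
- assert (ln (1 + h / x) <= ln (exp (h / x))) by (apply ln_le; [lra | apply exp_ineq1_le]).
  rewrite ln_exp in *. lra.
Qed.

Lemma window_eventually_short lam eta : 0 < lam < 1 -> 0 < eta ->
  exists M, forall x, M < x -> 1 < x /\ 1 <= ln x /\ Rpower x lam / x <= eta.
Proof.
intros Hl He.
set (K := Rmax 1 (- ln eta / (1 - lam))).
exists (exp K). intros x Hx.
assert (HK1 : 1 <= K) by apply Rmax_l.
assert (HK2 : - ln eta / (1 - lam) <= K) by apply Rmax_r.
assert (Hx0 : 0 < x) by (pose proof (exp_pos K); lra).
assert (HlnK : K < ln x) by (rewrite <- (ln_exp K); apply ln_increasing; [apply exp_pos | lra]).
assert (Hx1 : 1 < x) by (rewrite <- (exp_ln x) by lra; rewrite <- exp_0; apply exp_increasing; lra).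
split; [exact Hx1 | split; [lra |]].
assert (Hpow : Rpower x lam / x = exp (- ((1 - lam) * ln x))).
{ unfold Rpower, Rdiv. rewrite <- (exp_ln x) at 2 by lra.
  rewrite <- exp_Ropp, <- exp_plus. f_equal. ring. }
rewrite Hpow, <- (exp_ln eta) by lra. apply exp_le_mono.
assert (- ln eta <= (1 - lam) * ln x); [|lra].
apply Rle_trans with ((1 - lam) * K); [|apply Rmult_le_compat_l; lra].
unfold Rdiv in HK2. apply (Rmult_le_compat_l (1 - lam)) in HK2; [|lra].
replace ((1 - lam) * (- ln eta * / (1 - lam))) with (- ln eta) in HK2 by (field; lra). exact HK2.
Qed.

Lemma log_ratio_near_one x h eta : 0 < x -> 0 <= h -> 1 <= ln x -> h / x <= eta ->
  1 - eta <= ln x / ln (x + h) <= 1.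
Proof.
intros Hx Hh Hlx Hhx. destruct (ln_shift_bounds x h Hx Hh) as [H0 H1].
assert (Hly : 0 < ln (x + h)) by lra.
split.
- apply (Rmult_le_reg_r (ln (x + h))); [lra|].
  replace (ln x / ln (x + h) * ln (x + h)) with (ln x) by (field; lra). nra.
- apply (Rmult_le_reg_r (ln (x + h))); [lra|].
  replace (ln x / ln (x + h) * ln (x + h)) with (ln x) by (field; lra). lra.
Qed.

Lemma power_ratio_near_one lam x h eta : 0 <= lam <= 1 -> 0 < x -> 0 <= h -> h / x <= eta ->
  1 - eta <= Rpower x lam / Rpower (x + h) lam <= 1.
Proof.
intros Hl Hx Hh Hhx. destruct (ln_shift_bounds x h Hx Hh) as [H0 H1].
assert (Hpow : Rpower x lam / Rpower (x + h) lam = exp (- (lam * (ln (x + h) - ln x)))).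
{ unfold Rpower, Rdiv. rewrite <- exp_Ropp, <- exp_plus. f_equal. ring. }
rewrite Hpow. split.
- eapply Rle_trans; [|apply exp_ineq1_le]. nra.
- rewrite <- exp_0. apply exp_le_mono. nra.
Qed.

(* exp u <= 1/(1-u): the growth factor exp u over a window is 1 + O(u). *)
Lemma exp_mul_one_minus_le u : exp u * (1 - u) <= 1.
Proof.
assert (1 - u <= exp (- u)) by (pose proof (exp_ineq1_le (- u)); lra).
assert (exp u * exp (- u) = 1) by (rewrite <- exp_plus, Rplus_opp_r; apply exp_0).
pose proof (exp_pos u). nra.
Qed.

Lemma exp_neg_le_quadratic v : 0 <= v -> exp (- v) <= 1 - v + v ^ 2.
Proof.
intros Hv. rewrite exp_Ropp. pose proof (exp_ineq1_le v). pose proof (exp_pos v).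
apply (Rmult_le_reg_r (exp v)); [lra|]. rewrite Rinv_l by lra.
assert (Hpos : 0 <= 1 - v + v ^ 2) by nra.
assert ((1 - v + v ^ 2) * (1 + v) <= (1 - v + v ^ 2) * exp v)
  by (apply Rmult_le_compat_l; lra).
nra.
Qed.

Lemma count_ratio_upper q u a r d delta :
  0 < delta <= 1/10 -> 0 < u <= delta -> d = u * delta -> 1 - delta <= a <= 1 ->
  r <= exp u -> q * u * a <= (1 + d) * r - (1 - d) -> q < 1 + 10 * delta.
Proof.
intros Hdelta Hu Hd Ha Hr Hq. subst d.
assert (Hdu : 0 <= u * delta) by nra.
assert (Hgrow : ((1 + u * delta) * r - (1 - u * delta)) * (1 - u) <= u * (1 + 2 * delta)).
{ pose proof (exp_mul_one_minus_le u).
  assert (r * (1 - u) <= 1) by nra. nra. }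
assert (Hqa : q * a * (1 - u) <= 1 + 2 * delta).
{ apply (Rmult_le_reg_l u); [lra|]. nra. }
destruct (Rle_lt_dec q 0) as [Hq0|Hq0]; [lra|].
assert (Hau : 1 - 2 * delta <= a * (1 - u)) by nra.
nra.
Qed.

Lemma count_ratio_lower q u a b r d delta :
  0 < delta <= 1/10 -> 0 < u <= delta -> d = u * delta -> 1 - delta <= a <= 1 ->
  1 - delta <= b <= 1 -> exp (u * a) <= r ->
  ((1 - d) - (1 + d) / r) * b <= q * u -> 1 - 10 * delta < q.
Proof.
intros Hdelta Hu Hd Ha Hb Hr Hq. subst d.
set (v := u * a).
assert (Hv : u * (1 - delta) <= v <= u) by (unfold v; split; nra).
assert (Hv0 : 0 <= v) by nra.
assert (Hinv : / r <= 1 - v + v ^ 2).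
{ eapply Rle_trans; [|apply exp_neg_le_quadratic; lra].
  rewrite exp_Ropp. apply Rinv_le_contravar; [apply exp_pos | exact Hr]. }
assert (Hgain : u * (1 - 4 * delta) <= (1 - u * delta) - (1 + u * delta) / r).
{ unfold Rdiv. assert (0 <= v - v * v) by nra.
  assert (v * v <= u * delta) by nra.
  assert (0 <= u * delta) by nra. nra. }
assert (Hqu : u * (1 - 4 * delta) * (1 - delta) <= q * u).
{ eapply Rle_trans; [|exact Hq]. apply Rmult_le_compat; nra. }
assert (Hq1 : (1 - 4 * delta) * (1 - delta) <= q).
{ apply (Rmult_le_reg_l u); [lra|]. nra. }
nra.
Qed.

Lemma near_one_ratio S E d : 0 < E -> Rabs (S / E - 1) < d -> (1 - d) * E < S < (1 + d) * E.
Proof.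
intros HE H. apply Rabs_def2 in H. replace S with (S / E * E) by (field; lra). split; nra.
Qed.

(* Rewriting the two descriptions of a window sum (its size relative to the
   growth function, and the count N times the range of the weights) as
   inequalities on q = N lx / h, the growth factor r = Ey / Ex and the
   ratios a = h / Py, b = lx / ly. *)
Lemma window_sum_inequalities N lx ly h Py Ex Ey Sx Sy u d :
  0 < lx -> 0 < ly -> 0 < h -> 0 < Py -> 0 < Ex -> 0 < Ey ->
  (1 - d) * Ex < Sx < (1 + d) * Ex -> (1 - d) * Ey < Sy < (1 + d) * Ey ->
  N * (u * lx * Ex / Py) <= Sy - Sx <= N * (u * ly * Ey / h) ->
  N * lx / h * u * (h / Py) <= (1 + d) * (Ey / Ex) - (1 - d) /\
  ((1 - d) - (1 + d) / (Ey / Ex)) * (lx / ly) <= N * lx / h * u.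
Proof.
intros Hlx Hly Hh HPy HEx HEy HSx HSy [Hinc1 Hinc2]. split.
- apply (Rmult_le_reg_r Ex); [exact HEx|].
  replace (N * lx / h * u * (h / Py) * Ex) with (N * (u * lx * Ex / Py)) by (field; lra).
  replace (((1 + d) * (Ey / Ex) - (1 - d)) * Ex) with ((1 + d) * Ey - (1 - d) * Ex)
    by (field; lra). lra.
- apply (Rmult_le_reg_r (Ey * ly / lx)); [apply Rdiv_lt_0_compat; nra|].
  replace (N * lx / h * u * (Ey * ly / lx)) with (N * (u * ly * Ey / h)) by (field; lra).
  replace (((1 - d) - (1 + d) / (Ey / Ex)) * (lx / ly) * (Ey * ly / lx))
    with ((1 - d) * Ey - (1 + d) * Ex) by (field; lra). lra.
Qed.

Section WindowCount.

Variable lam : R.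
Hypothesis Hlam : 0 < lam < 1.
Variable A : nat -> bool.

Definition window_ratio (x : R) : R :=
  (pi_A A (x + Rpower x lam) - pi_A A x) / (Rpower x lam / ln x).

Lemma window_ratio_at_scale c delta :
  0 < delta <= 1/10 -> 0 < c -> c * (1 - lam) <= delta ->
  asymp (fun x => sum_A A x (weight lam c)) (growth lam c) ->
  exists M, forall x, M < x -> Rabs (window_ratio x - 1) < 10 * delta.
Proof.
intros Hdelta Hc Hu Hasymp.
set (u := c * (1 - lam)) in *.
assert (Hu0 : 0 < u) by (apply Rmult_lt_0_compat; lra).
set (d := u * delta).
assert (Hd : 0 < d) by (apply Rmult_lt_0_compat; lra).
apply is_lim_spec in Hasymp. destruct (Hasymp (mkposreal d Hd)) as [M1 HM1]. simpl in HM1.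
destruct (window_eventually_short lam delta Hlam) as [M2 HM2]; [lra|].
exists (Rmax M1 M2). intros x Hx.
assert (HxM1 : M1 < x) by (eapply Rle_lt_trans; [apply Rmax_l | exact Hx]).
assert (HxM2 : M2 < x) by (eapply Rle_lt_trans; [apply Rmax_r | exact Hx]).
destruct (HM2 x HxM2) as [Hx1 [Hlnx Hshort]].
set (h := Rpower x lam) in *. set (y := x + h).
assert (Hh : 0 < h) by apply exp_pos.
set (Ex := growth lam c x). set (Ey := growth lam c y). set (Py := Rpower y lam).
assert (HEx : 0 < Ex) by apply exp_pos. assert (HEy : 0 < Ey) by apply exp_pos.
assert (HPy : 0 < Py) by apply exp_pos.
assert (Hlnx0 : 0 < ln x) by lra.
assert (Hlny : 0 < ln y) by (rewrite <- ln_1; apply ln_increasing; unfold y; lra).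
pose proof (near_one_ratio _ _ _ HEx (HM1 x HxM1)) as HSx.
pose proof (near_one_ratio _ _ _ HEy (HM1 y ltac:(unfold y; lra))) as HSy.
set (N := pi_A A y - pi_A A x).
assert (Hinc : N * (u * ln x * Ex / Py)
               <= sum_A A y (weight lam c) - sum_A A x (weight lam c)
               <= N * (u * ln y * Ey / h)).
{ apply sum_A_increment; [unfold y; lra | intros; apply weight_bounds; lra]. }
destruct (window_sum_inequalities _ _ _ _ _ _ _ _ _ _ _ Hlnx0 Hlny Hh HPy HEx HEy HSx HSy Hinc)
  as [Hup Hlo].
set (q := N * ln x / h) in *. set (r := Ey / Ex) in *.
set (a := h / Py) in *. set (b := ln x / ln y) in *.
destruct (growth_ratio_bounds lam c x Hlam Hc) as [Hr1 Hr2]; [lra|].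
fold h y Ey Ex r Py a u in Hr1, Hr2.
destruct (power_ratio_near_one lam x h delta) as [Ha1 Ha2]; [lra|lra|lra|lra|].
destruct (log_ratio_near_one x h delta) as [Hb1 Hb2]; [lra|lra|lra|lra|].
fold h y Py a in Ha1, Ha2. fold y b in Hb1, Hb2.
replace (window_ratio x) with q by (unfold window_ratio, q, N; fold h y; field; lra).
apply Rabs_def1.
- assert (q < 1 + 10 * delta); [|lra]. apply (count_ratio_upper q u a r d delta); auto; lra.
- assert (1 - 10 * delta < q); [|lra]. apply (count_ratio_lower q u a b r d delta); auto; lra.
Qed.

End WindowCount.

(* Given epsilon, pick a scale c_n small enough for the window ratio to be
   eventually within epsilon of 1. *)
Theorem mainTheorem6 (lam : R) (A : nat -> bool) :
  0 < lam < 1 ->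
  (exists c : nat -> R,
     (forall n, 0 < c n) /\ is_lim_seq c 0 /\
     (forall n,
        asymp
          (fun x => sum_A A x (fun a =>
             c n * (1 - lam) * ln (INR a) * exp (c n * Rpower (INR a) (1 - lam))
             / Rpower (INR a) lam))
          (fun x => exp (c n * Rpower x (1 - lam))))) ->
  asymp (fun x => pi_A A (x + Rpower x lam) - pi_A A x)
        (fun x => Rpower x lam / ln x).
Proof.
intros Hlam [c [Hc_pos [Hc_lim Hc_asymp]]].
apply is_lim_spec. intros eps.
set (delta := Rmin eps 1 / 10).
assert (Hmin : 0 < Rmin eps 1) by (apply Rmin_glb_lt; [apply cond_pos | lra]).
assert (Hdelta : 0 < delta <= 1/10) by (pose proof (Rmin_r eps 1); unfold delta; lra).
apply is_lim_seq_spec in Hc_lim.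
destruct (Hc_lim (mkposreal delta (proj1 Hdelta))) as [n Hn].
specialize (Hn n (Nat.le_refl n)). simpl in Hn.
rewrite Rminus_0_r, Rabs_pos_eq in Hn by (left; apply Hc_pos).
destruct (window_ratio_at_scale lam Hlam A (c n) delta Hdelta (Hc_pos n))
  as [M HM]; [pose proof (Hc_pos n); nra | apply Hc_asymp |].
exists M. intros x Hx.
assert (10 * delta <= eps) by (pose proof (Rmin_l eps 1); unfold delta; lra).
specialize (HM x Hx). unfold window_ratio in HM. simpl. lra.
Qed.
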